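(* Let $R(H)$ be the number of integer solutions $(x,a,b,c,d)\in[-2H,2H]\times[-H,H]^4$ to the equation \[ x^3-bx^2+(ac-4d)x-(a^2d-4bd+c^2)=0. \] Then $R(H)\ll H^2(\log H)^2$ as $H\to\infty$. *)

From Stdlib Require Import ZArith List Reals.
Import ListNotations.
Open Scope Z_scope.

Definition zrange (h : Z) : list Z :=
  map (fun k : nat => Z.of_nat k - h) (seq 0 (Z.to_nat (2 * h + 1))).

Definition sol_eqn (x a b c d : Z) : bool :=
  Z.eqb (x^3 - b*x^2 + (a*c - 4*d)*x - (a^2*d - 4*b*d + c^2)) 0.

Definition R_count (H : nat) : nat :=
  let h := Z.of_nat H in
  list_sum (map (fun x =>
  list_sum (map (fun a =>
  list_sum (map (fun b =>
  list_sum (map (fun c =>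
  list_sum (map (fun d => Nat.b2n (sol_eqn x a b c d))
    (zrange h))) (zrange h))) (zrange h))) (zrange h))) (zrange (2 * h))).

(* With m = a^2 + 4x - 4b, n = x^2 - 4d and k = ax - 2c the equation reads k^2 = m n.
   If m = n = 0, a solution is determined by (x, a), which leaves O(H^2) of them.
   Otherwise m = e g u^2, n = e g v^2, k = s g u v with signs e, s and integers g >= 1,
   u, v >= 0, and then g (s u x - e v a)^2 = e (4 c^2 + 16 d (x - b)) = O(H^2).  Put r = max(u, v) and
   let w be a if r = u, x if r = v, so that w^2 = e g r^2 + O(H).  For fixed (g, r) this
   leaves O(1 + H / (r sqrt g)) choices for w, r + 1 for min(u, v), and O(1 + H / (r sqrt g))
   for the remaining variable of (x, a).  As g r^2 = O(H^2), that is O(H^2 / (g r)) solutions,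
   and summing over g <= 16 H^2 and r <= 4 H gives O(H^2 log^2 H). *)

From Stdlib Require Import ZArith List Bool Reals Lia Lra Psatz ClassicalEpsilon.
Import ListNotations.

Definition count {A} (p : A -> bool) (l : list A) : nat := length (filter p l).

Open Scope nat_scope.

Section Counting.
Context {A : Type}.
Implicit Types (p q : A -> bool) (l : list A).

Lemma count_app p l1 l2 : count p (l1 ++ l2) = count p l1 + count p l2.
Proof. unfold count. now rewrite filter_app, length_app. Qed.

Lemma count_map {B} p (f : B -> A) (l : list B) :
  count p (map f l) = count (fun x => p (f x)) l.
Proof. unfold count. induction l as [|x l IH]; simpl; auto. destruct (p (f x)); simpl; auto. Qed.

Lemma count_flat_map {B} p (f : B -> list A) (l : list B) :
  count p (flat_map f l) = list_sum (map (fun x => count p (f x)) l).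
Proof. induction l as [|x l IH]; simpl; auto. now rewrite count_app, IH. Qed.

Lemma count_b2n p l : count p l = list_sum (map (fun x => Nat.b2n (p x)) l).
Proof. unfold count. induction l as [|x l IH]; simpl; auto. destruct (p x); simpl; lia. Qed.

Lemma count_le_length p l : count p l <= length l.
Proof. apply filter_length_le. Qed.

Lemma count_false p l : (forall x, In x l -> p x = false) -> count p l = 0.
Proof.
  unfold count. induction l as [|x l IH]; simpl; intros Hp; auto.
  rewrite Hp by auto. auto.
Qed.

Lemma count_le_or p q1 q2 l :
  (forall x, In x l -> p x = true -> q1 x = true \/ q2 x = true) ->
  count p l <= count q1 l + count q2 l.
Proof.
  unfold count. induction l as [|x l IH]; simpl; intros Hp; auto.
  specialize (IH (fun y Hy => Hp y (or_intror Hy))).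
  destruct (p x) eqn:E.
  - destruct (Hp x (or_introl eq_refl) E) as [E1|E1]; rewrite E1;
      [destruct (q2 x)|destruct (q1 x)]; simpl; lia.
  - destruct (q1 x), (q2 x); simpl; lia.
Qed.

Lemma count_le_mono p q l :
  (forall x, In x l -> p x = true -> q x = true) -> count p l <= count q l.
Proof.
  intros Hpq. rewrite <- (Nat.add_0_r (count q l)), <- (count_false (fun _ => false) l) by auto.
  apply count_le_or. auto.
Qed.

Lemma count_flat_map_le {B} p (f : B -> list A) (l : list B) (bound : B -> nat) :
  (forall x, In x l -> count p (f x) <= bound x) ->
  count p (flat_map f l) <= list_sum (map bound l).
Proof.
  rewrite count_flat_map. induction l as [|x l IH]; simpl; intros Hb; auto.
  specialize (Hb x (or_introl eq_refl)) as Hx.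
  specialize (IH (fun y Hy => Hb y (or_intror Hy))). lia.
Qed.

Lemma count_flat_map_le_const {B} p (f : B -> list A) (l : list B) (bound : nat) :
  (forall x, In x l -> count p (f x) <= bound) ->
  count p (flat_map f l) <= length l * bound.
Proof.
  intros Hb. eapply Nat.le_trans; [apply (count_flat_map_le _ _ _ (fun _ => bound)); auto|].
  clear Hb. induction l; simpl; lia.
Qed.

Lemma count_le_of_injective_rel {B} p (q : B -> bool) l (l' : list B) (rel : A -> B -> Prop) :
  NoDup l ->
  (forall x, In x l -> p x = true -> exists y, In y l' /\ q y = true /\ rel x y) ->
  (forall x x' y, In x l -> In x' l -> p x = true -> p x' = true ->
     rel x y -> rel x' y -> x = x') ->
  count p l <= count q l'.
Proof.
  intros Hnd Hex Hun. unfold count.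
  destruct (filter p l) as [|x0 r] eqn:E; [simpl; lia|].
  assert (Hx0 : In x0 (filter p l)) by (rewrite E; left; auto).
  apply filter_In in Hx0 as [Hx0 Hp0].
  destruct (Hex x0 Hx0 Hp0) as [y0 _].
  set (f := fun x => epsilon (inhabits y0) (fun y => In y l' /\ q y = true /\ rel x y)).
  assert (Hf : forall x, In x (filter p l) -> In (f x) l' /\ q (f x) = true /\ rel x (f x)).
  { intros x Hx. apply filter_In in Hx as [Hx Hp]. apply epsilon_spec. auto. }
  rewrite <- E, <- (length_map f). apply NoDup_incl_length.
  - apply NoDup_map_NoDup_ForallPairs; [|now apply NoDup_filter].
    intros x x' Hx Hx' Hxx'.
    destruct (Hf x Hx) as (_ & _ & Rx). destruct (Hf x' Hx') as (_ & _ & Rx').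
    apply filter_In in Hx, Hx'. rewrite Hxx' in Rx. eapply Hun; eauto; tauto.
  - intros y Hy. apply in_map_iff in Hy as [x [<- Hx]].
    destruct (Hf x Hx) as (H1 & H2 & _). now apply filter_In.
Qed.

Lemma list_sum_b2n_mul p (c : nat) l :
  list_sum (map (fun x => Nat.b2n (p x) * c) l) = count p l * c.
Proof. rewrite count_b2n. induction l as [|x l IH]; simpl; auto. rewrite IH. lia. Qed.

End Counting.

Open Scope Z_scope.

Lemma count_le_of_diameter (p : Z -> bool) (l : list Z) (K : Z) :
  NoDup l -> 0 <= K ->
  (forall x y, In x l -> In y l -> p x = true -> p y = true -> Z.abs (x - y) <= K) ->
  (count p l <= Z.to_nat (2 * K + 1))%nat.
Proof.
  intros Hnd HK Hd. unfold count.
  destruct (filter p l) as [|x0 r] eqn:E; [simpl; lia|].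
  assert (Hx0 : In x0 (filter p l)) by (rewrite E; left; auto).
  apply filter_In in Hx0 as [Hx0 Hp0]. rewrite <- E.
  set (window := map (fun k => x0 - K + Z.of_nat k) (seq 0 (Z.to_nat (2 * K + 1)))).
  replace (Z.to_nat (2 * K + 1)) with (length window)
    by (unfold window; now rewrite length_map, length_seq).
  apply NoDup_incl_length; [now apply NoDup_filter|].
  intros y Hy. apply filter_In in Hy as [Hy Hpy]. specialize (Hd y x0 Hy Hx0 Hpy Hp0).
  apply in_map_iff. exists (Z.to_nat (y - x0 + K)). split; [lia|]. apply in_seq. lia.
Qed.

Definition zint (lo hi : Z) : list Z :=
  map (fun k => lo + Z.of_nat k) (seq 0 (Z.to_nat (hi - lo + 1))).

Lemma in_zint lo hi z : In z (zint lo hi) <-> lo <= z <= hi.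
Proof.
  unfold zint. rewrite in_map_iff. split.
  - intros [k [<- Hk]]. apply in_seq in Hk. lia.
  - intros Hz. exists (Z.to_nat (z - lo)). split; [lia|]. apply in_seq. lia.
Qed.

Lemma NoDup_zint lo hi : NoDup (zint lo hi).
Proof.
  apply NoDup_map_NoDup_ForallPairs; [|apply seq_NoDup].
  intros k k' _ _ E. lia.
Qed.

Lemma length_zint lo hi : length (zint lo hi) = Z.to_nat (hi - lo + 1).
Proof. unfold zint. now rewrite length_map, length_seq. Qed.

Lemma zrange_zint h : zrange h = zint (- h) h.
Proof.
  unfold zrange, zint. replace (h - - h + 1) with (2 * h + 1) by ring.
  apply map_ext. intros. ring.
Qed.

Lemma in_zrange h z : In z (zrange h) <-> - h <= z <= h.
Proof. rewrite zrange_zint. apply in_zint. Qed.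

Lemma NoDup_zrange h : NoDup (zrange h).
Proof. rewrite zrange_zint. apply NoDup_zint. Qed.

Lemma NoDup_list_prod {A B} (l : list A) (l' : list B) :
  NoDup l -> NoDup l' -> NoDup (list_prod l l').
Proof.
  intros Hl Hl'. induction Hl as [|x l Hx Hl IH]; simpl; [constructor|].
  apply NoDup_app; auto.
  - apply NoDup_map_NoDup_ForallPairs; auto. intros y y' _ _ E. now injection E.
  - intros z Hz Hz'. apply in_map_iff in Hz as [y [<- _]].
    apply in_prod_iff in Hz'. tauto.
Qed.

Lemma list_sum_map_list_prod {A B} (F : A * B -> nat) l l' :
  list_sum (map F (list_prod l l')) =
  list_sum (map (fun x => list_sum (map (fun y => F (x, y)) l')) l).
Proof.
  induction l as [|x l IH]; simpl; auto.
  now rewrite map_app, list_sum_app, IH, map_map.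
Qed.

Definition box (h : Z) : list (Z * Z * Z * Z * Z) :=
  list_prod (list_prod (list_prod (list_prod (zrange (2 * h)) (zrange h)) (zrange h))
    (zrange h)) (zrange h).

Definition solves (t : Z * Z * Z * Z * Z) : bool :=
  let '(x, a, b, c, d) := t in sol_eqn x a b c d.

Lemma R_count_box H : R_count H = count solves (box (Z.of_nat H)).
Proof. rewrite count_b2n. unfold box. now rewrite !list_sum_map_list_prod. Qed.

Lemma in_box h x a b c d : In (x, a, b, c, d) (box h) ->
  -(2 * h) <= x <= 2 * h /\ - h <= a <= h /\ - h <= b <= h /\ - h <= c <= h /\ - h <= d <= h.
Proof. unfold box. rewrite !in_prod_iff, !in_zrange. lia. Qed.

Lemma NoDup_box h : NoDup (box h).
Proof. repeat apply NoDup_list_prod; apply NoDup_zrange. Qed.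

Definition mfac (x a b : Z) : Z := a^2 + 4 * x - 4 * b.
Definition nfac (x d : Z) : Z := x^2 - 4 * d.
Definition kfac (x a c : Z) : Z := a * x - 2 * c.

Lemma sol_eqn_factor x a b c d :
  sol_eqn x a b c d = true -> kfac x a c ^ 2 = mfac x a b * nfac x d.
Proof. unfold sol_eqn, mfac, nfac, kfac. rewrite Z.eqb_eq. lia. Qed.

Lemma mul_eq_square_pos_l M N k : 0 < M -> M * N = k^2 ->
  exists g u v, 1 <= g /\ 1 <= u /\ M = g * u^2 /\ N = g * v^2 /\ k = g * u * v.
Proof.
  intros HM HMN.
  set (G := Z.gcd M k).
  assert (HG : 0 < G) by (pose proof (Z.gcd_nonneg M k); pose proof (Z.gcd_eq_0_l M k); lia).
  destruct (Z.gcd_divide_l M k) as [u Hu]. destruct (Z.gcd_divide_r M k) as [v Hv].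
  fold G in Hu, Hv.
  assert (Huv : Z.gcd u v = 1).
  { apply (Z.mul_cancel_r _ _ G); [lia|]. rewrite <- Z.gcd_mul_mono_r_nonneg by lia.
    rewrite <- Hu, <- Hv. lia. }
  assert (Hu1 : 1 <= u) by nia.
  assert (HuN : u * N = G * v^2) by (apply (Z.mul_cancel_l _ _ G); [lia|]; nia).
  assert (Hdiv : (u | v * (v * G))) by (exists N; lia).
  destruct (Z.gauss _ _ _ (Z.gauss _ _ _ Hdiv Huv) Huv) as [g Hg].
  exists g, u, v. assert (1 <= g) by nia.
  assert (N = g * v^2) by (apply (Z.mul_cancel_l _ _ u); nia).
  repeat split; nia.
Qed.

Lemma mul_eq_square_nonzero_l m n k : m <> 0 -> m * n = k^2 ->
  exists e s g u v, (e = 1 \/ e = -1) /\ (s = 1 \/ s = -1) /\ 1 <= g /\ 0 <= u /\ 0 <= v /\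
    m = e * g * u^2 /\ n = e * g * v^2 /\ k = s * g * u * v.
Proof.
  intros Hm Hmn.
  assert (He : exists e, (e = 1 \/ e = -1) /\ 0 < e * m)
    by (destruct (Z.lt_ge_cases m 0); [exists (-1)|exists 1]; lia).
  destruct He as [e [He Hem]].
  destruct (mul_eq_square_pos_l (e * m) (e * n) k) as (g & u & v & Hg & Hu & HM & HN & Hk);
    [auto|destruct He; subst; lia|].
  assert (Hs : exists s, (s = 1 \/ s = -1) /\ v = s * Z.abs v)
    by (destruct (Z.lt_ge_cases v 0); [exists (-1)|exists 1]; lia).
  destruct Hs as [s [Hs Hv]].
  exists e, s, g, u, (Z.abs v). repeat split; auto; lia.
Qed.

Lemma mul_eq_square_decomp m n k : m * n = k^2 -> m <> 0 \/ n <> 0 ->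
  exists e s g u v, (e = 1 \/ e = -1) /\ (s = 1 \/ s = -1) /\ 1 <= g /\ 0 <= u /\ 0 <= v /\
    m = e * g * u^2 /\ n = e * g * v^2 /\ k = s * g * u * v.
Proof.
  intros Hmn [Hm|Hn]; [now apply mul_eq_square_nonzero_l|].
  destruct (mul_eq_square_nonzero_l n m k)
    as (e & s & g & v & u & He & Hs & Hg & Hv & Hu & Hn' & Hm' & Hk); [auto|lia|].
  exists e, s, g, u, v. repeat split; auto. rewrite Hk. ring.
Qed.

Lemma key_identity x a b c d e s g u v : (e = 1 \/ e = -1) -> (s = 1 \/ s = -1) ->
  mfac x a b = e * g * u^2 -> nfac x d = e * g * v^2 -> kfac x a c = s * g * u * v ->
  g * (s * u * x - e * v * a)^2 = e * (4 * c^2 + 16 * d * (x - b)).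
Proof.
  unfold mfac, nfac, kfac. intros He Hs Hm Hn Hk.
  replace (4 * c^2 + 16 * d * (x - b)) with ((2 * c)^2 + (4 * d) * (4 * (x - b))) by ring.
  replace (2 * c) with (a * x - s * g * u * v) by lia.
  replace (4 * d) with (x^2 - e * g * v^2) by lia.
  replace (4 * (x - b)) with (e * g * u^2 - a^2) by lia.
  destruct He, Hs; subst; ring.
Qed.

Lemma degenerate_kfac x a b c d :
  sol_eqn x a b c d = true -> mfac x a b = 0 -> kfac x a c = 0.
Proof.
  intros Hsol Hm. apply sol_eqn_factor in Hsol. rewrite Hm, Z.mul_0_l in Hsol.
  apply Z.pow_eq_0 in Hsol; lia.
Qed.

Definition code : Type := Z * Z * Z * Z * Z * Z * Z.

Definition parametrises (t : Z * Z * Z * Z * Z) (k : code) : Prop :=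
  let '(x, a, b, c, d) := t in
  let '(g, e, s, u, v, x', a') := k in
  x' = x /\ a' = a /\
  mfac x a b = e * g * u^2 /\ nfac x d = e * g * v^2 /\ kfac x a c = s * g * u * v.

Lemma parametrises_inj t t' k : parametrises t k -> parametrises t' k -> t = t'.
Proof.
  destruct t as [[[[x a] b] c] d], t' as [[[[x' a'] b'] c'] d'].
  destruct k as [[[[[[g e] s] u] v] x0] a0]. unfold parametrises, mfac, nfac, kfac.
  intros (-> & -> & Hm & Hn & Hk) (Hx & Ha & Hm' & Hn' & Hk'). subst.
  repeat f_equal; lia.
Qed.

Definition code_ok (h : Z) (k : code) : bool :=
  let '(g, e, s, u, v, x, a) := k in
  (Z.abs (a^2 - e * (g * u^2)) <=? 12 * h) && (Z.abs (x^2 - e * (g * v^2)) <=? 12 * h) &&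
  (g * (s * u * x - e * v * a)^2 <=? 52 * h * h).

Lemma sq_le_of_bound w B : - B <= w <= B -> w^2 <= B * B.
Proof. nia. Qed.

Lemma parametrisation_bounds h x a b c d e s g u v : 1 <= h ->
  -(2 * h) <= x <= 2 * h -> - h <= a <= h -> - h <= b <= h -> - h <= c <= h -> - h <= d <= h ->
  (e = 1 \/ e = -1) -> (s = 1 \/ s = -1) ->
  mfac x a b = e * g * u^2 -> nfac x d = e * g * v^2 -> kfac x a c = s * g * u * v ->
  code_ok h (g, e, s, u, v, x, a) = true /\ g * u^2 <= 16 * h * h /\ g * v^2 <= 16 * h * h.
Proof.
  intros Hh Hx Ha Hb Hc Hd He Hs Hm Hn Hk.
  pose proof (key_identity x a b c d e s g u v He Hs Hm Hn Hk) as Ht.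
  unfold mfac, nfac in Hm, Hn. unfold code_ok. rewrite !andb_true_iff, !Z.leb_le.
  assert (Ha2 : a^2 <= h * h) by (apply sq_le_of_bound; lia).
  assert (Hx2 : x^2 <= (2 * h) * (2 * h)) by (apply sq_le_of_bound; lia).
  assert (Hc2 : c^2 <= h * h) by (apply sq_le_of_bound; lia).
  assert (Hhh : h <= h * h) by (clear - Hh; nia).
  assert (Hdxb : Z.abs (d * (x - b)) <= h * (3 * h))
    by (clear - Hx Hb Hd; rewrite Z.abs_mul; apply Z.mul_le_mono_nonneg; lia).
  repeat split.
  - clear - Hm Hx Hb. lia.
  - clear - Hn Hd. lia.
  - clear - Ht He Hc2 Hdxb. destruct He; subst; lia.
  - clear - Hm He Hx Hb Ha2 Hhh. destruct He; subst; lia.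
  - clear - Hn He Hd Hx2 Hhh. destruct He; subst; lia.
Qed.

Definition signs : list Z := [1; -1].

Lemma in_signs e : In e signs -> e = 1 \/ e = -1.
Proof. simpl. intuition lia. Qed.

(* [r] is max(u, v) and [o] is min(u, v); [w] is the variable whose square is within O(h) of
   e g r^2 (a when r = u, x when r = v), and [z] is the other one. *)
Definition mk_code (swap : bool) (g r e s o w z : Z) : code :=
  if swap then (g, e, s, o, r, w, z) else (g, e, s, r, o, z, w).

Definition fiber (h g r : Z) : list code :=
  flat_map (fun swap => flat_map (fun e => flat_map (fun s => flat_map (fun o =>
    flat_map (fun w => map (mk_code swap g r e s o w) (zrange (2 * h))) (zrange (2 * h)))
    (zint 0 r)) signs) signs) [false; true].

Definition codes (h : Z) : list code :=
  flat_map (fun g => flat_map (fiber h g) (zint 1 (4 * h))) (zint 1 (16 * h * h)).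

Lemma in_codes h swap g r e s o w z :
  1 <= g <= 16 * h * h -> 1 <= r <= 4 * h -> (e = 1 \/ e = -1) -> (s = 1 \/ s = -1) ->
  0 <= o <= r -> - (2 * h) <= w <= 2 * h -> - (2 * h) <= z <= 2 * h ->
  In (mk_code swap g r e s o w z) (codes h).
Proof.
  intros Hg Hr He Hs Ho Hw Hz. unfold codes, fiber.
  apply in_flat_map. exists g. split; [now apply in_zint|].
  apply in_flat_map. exists r. split; [now apply in_zint|].
  apply in_flat_map. exists swap. split; [destruct swap; simpl; auto|].
  apply in_flat_map. exists e. split; [simpl; lia|].
  apply in_flat_map. exists s. split; [simpl; lia|].
  apply in_flat_map. exists o. split; [now apply in_zint|].
  apply in_flat_map. exists w. split; [now apply in_zrange|].
  apply in_map. now apply in_zrange.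
Qed.

Definition degenerate (t : Z * Z * Z * Z * Z) : bool :=
  let '(x, a, b, c, d) := t in (mfac x a b =? 0) && (nfac x d =? 0).

Lemma solution_has_code h t : 1 <= h -> In t (box h) ->
  solves t = true -> degenerate t = false ->
  exists k, In k (codes h) /\ code_ok h k = true /\ parametrises t k.
Proof.
  destruct t as [[[[x a] b] c] d]. simpl. intros Hh Hin Hsol Hnd.
  apply in_box in Hin as (Hx & Ha & Hb & Hc & Hd).
  destruct (mul_eq_square_decomp (mfac x a b) (nfac x d) (kfac x a c))
    as (e & s & g & u & v & He & Hs & Hg & Hu & Hv & Hm & Hn & Hk).
  { now rewrite (sol_eqn_factor x a b c d Hsol). }
  { destruct (Z.eqb_spec (mfac x a b) 0), (Z.eqb_spec (nfac x d) 0); simpl in Hnd;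
      auto; discriminate. }
  destruct (parametrisation_bounds h x a b c d e s g u v) as (Hok & Hgu & Hgv); auto.
  assert (Hpar : parametrises (x, a, b, c, d) (g, e, s, u, v, x, a)) by (simpl; auto).
  assert (Hgr : forall r, 1 <= r -> g * r^2 <= 16 * h * h ->
                  1 <= g <= 16 * h * h /\ 1 <= r <= 4 * h).
  { intros r Hr Hr2. assert (g <= g * r^2 /\ r * r <= g * r^2) by nia. nia. }
  destruct (Z.le_gt_cases v u) as [Hvu|Huv].
  - assert (Hu1 : 1 <= u).
    { destruct (Z.eq_dec u 0) as [Hu0|]; [|lia]. assert (v = 0) by lia. subst u v.
      replace (mfac x a b) with 0 in Hnd by (rewrite Hm; ring).
      replace (nfac x d) with 0 in Hnd by (rewrite Hn; ring). discriminate. }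
    exists (mk_code false g u e s v a x). repeat split; auto.
    destruct (Hgr u); auto. apply in_codes; auto; lia.
  - exists (mk_code true g v e s u x a). repeat split; auto.
    destruct (Hgr v); auto; [lia|]. apply in_codes; auto; lia.
Qed.

Lemma near_square_pair e s0 D w1 w2 : (e = 1 \/ e = -1) -> 0 <= s0 -> 0 <= w1 -> 0 <= w2 ->
  Z.abs (w1^2 - e * s0) <= D -> Z.abs (w2^2 - e * s0) <= D -> (w1 - w2)^2 * s0 <= 8 * D * D.
Proof.
  intros He Hs H1 H2 Hw1 Hw2.
  assert (Hd : (w1 - w2)^2 <= w1^2 \/ (w1 - w2)^2 <= w2^2)
    by (destruct (Z.le_ge_cases w1 w2); [right|left]; nia).
  assert (HD : 0 <= D) by lia.
  assert (Hd0 : 0 <= (w1 - w2)^2) by nia.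
  destruct He; subst e.
  - destruct (Z.le_gt_cases (2 * D) s0) as [Hbig|Hsmall].
    + (* (w1 - w2)^2 (w1 + w2)^2 = (w1^2 - w2^2)^2 <= 4 D^2 and (w1 + w2)^2 >= s0 *)
      assert (Hsum : s0 <= (w1 + w2)^2) by nia.
      assert (Hdiff : (w1^2 - w2^2)^2 <= (2 * D) * (2 * D)) by (apply sq_le_of_bound; lia).
      assert ((w1 - w2)^2 * s0 <= (w1 - w2)^2 * (w1 + w2)^2)
        by (apply Z.mul_le_mono_nonneg_l; lia).
      nia.
    + assert ((w1 - w2)^2 * s0 <= (3 * D) * (2 * D)) by (apply Z.mul_le_mono_nonneg; lia).
      lia.
  - assert ((w1 - w2)^2 * s0 <= D * D) by (apply Z.mul_le_mono_nonneg; lia).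
    lia.
Qed.

Lemma le_sqrt_div q s A : 0 < s -> q^2 * s <= A -> Z.abs q <= Z.sqrt (A / s).
Proof.
  intros Hs Hq. apply Z.sqrt_le_square; [apply Z.div_pos; nia|lia|].
  apply Z.div_le_lower_bound; [lia|]. rewrite <- Z.abs_square. nia.
Qed.

Lemma sqrt_div_mul_le A s : 0 < s -> 0 <= A -> Z.sqrt (A / s) * Z.sqrt (A / s) * s <= A.
Proof.
  intros Hs HA. assert (Hq : 0 <= A / s) by (apply Z.div_pos; lia).
  pose proof (Z.sqrt_spec _ Hq) as [Hsq _]. pose proof (Z.mul_div_le A s Hs). nia.
Qed.

Definition near_square (e s0 D w : Z) : bool := Z.abs (w^2 - e * s0) <=? D.

Lemma count_near_square_le e s0 D l : NoDup l -> (e = 1 \/ e = -1) -> 1 <= s0 ->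
  (count (near_square e s0 D) l <= 2 * Z.to_nat (2 * Z.sqrt (8 * D * D / s0) + 1))%nat.
Proof.
  intros Hl He Hs. set (K := Z.sqrt (8 * D * D / s0)).
  assert (Hclose : forall w1 w2, 0 <= w1 -> 0 <= w2 ->
            near_square e s0 D w1 = true -> near_square e s0 D w2 = true -> Z.abs (w1 - w2) <= K).
  { unfold near_square. intros w1 w2 H1 H2 Hw1 Hw2. apply Z.leb_le in Hw1, Hw2.
    apply le_sqrt_div; [lia|]. apply (near_square_pair e); auto; lia. }
  assert (HK : 0 <= K) by apply Z.sqrt_nonneg.
  eapply Nat.le_trans.
  { apply (count_le_or _ (fun w => near_square e s0 D w && Z.leb 0 w)
                         (fun w => near_square e s0 D w && Z.ltb w 0)).
    intros w _ Hw. rewrite Hw. simpl. destruct (Z.leb_spec 0 w); [left|right]; auto.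
    now apply Z.ltb_lt. }
  enough (count (fun w => near_square e s0 D w && Z.leb 0 w) l <= Z.to_nat (2 * K + 1) /\
          count (fun w => near_square e s0 D w && Z.ltb w 0) l <= Z.to_nat (2 * K + 1))%nat
    by lia.
  split; apply count_le_of_diameter; auto; intros w1 w2 _ _ Hw1 Hw2;
    apply andb_true_iff in Hw1 as [Hw1 Hs1], Hw2 as [Hw2 Hs2].
  - apply Z.leb_le in Hs1, Hs2. now apply Hclose.
  - apply Z.ltb_lt in Hs1, Hs2. replace (w1 - w2) with (- (- w1 - - w2)) by ring.
    rewrite Z.abs_opp. apply Hclose; try lia; unfold near_square in *;
      now rewrite Z.pow_2_r, Z.mul_opp_opp, <- Z.pow_2_r.
Qed.

Definition near_line (g r sg c B z : Z) : bool := g * (sg * r * z - c)^2 <=? B.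

Lemma count_near_line_le g r sg c B l : NoDup l -> 1 <= g -> 1 <= r -> (sg = 1 \/ sg = -1) ->
  (count (near_line g r sg c B) l <= Z.to_nat (2 * Z.sqrt (4 * B / (g * r^2)) + 1))%nat.
Proof.
  intros Hl Hg Hr Hsg. apply count_le_of_diameter; [auto|apply Z.sqrt_nonneg|].
  intros z1 z2 _ _ Hz1 Hz2. unfold near_line in Hz1, Hz2. apply Z.leb_le in Hz1, Hz2.
  apply le_sqrt_div; [apply Z.mul_pos_pos; [lia|apply Z.pow_pos_nonneg; lia]|].
  set (p := sg * r * z1 - c) in Hz1. set (q := sg * r * z2 - c) in Hz2.
  assert (Hpq : (z1 - z2)^2 * (g * r^2) = g * (p - q)^2)
    by (unfold p, q; destruct Hsg; subst; ring).
  clearbody p q.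
  assert (Hsq : (p - q)^2 <= 2 * p^2 + 2 * q^2)
    by (pose proof (Z.square_nonneg (p + q)) as Hs; clear - Hs; lia).
  rewrite Hpq. apply (Z.mul_le_mono_nonneg_l _ _ g) in Hsq; lia.
Qed.

Lemma code_ok_mk_code h swap g r e s o w z : code_ok h (mk_code swap g r e s o w z) = true ->
  near_square e (g * r^2) (12 * h) w = true /\
  near_line g r (if swap then e else s) (if swap then s * o * w else e * o * w) (52 * h * h) z
    = true.
Proof.
  unfold code_ok, mk_code, near_square, near_line.
  destruct swap; rewrite !andb_true_iff; intros ((Hu & Hv) & Ht); split; auto.
  now replace ((e * r * z - s * o * w)^2) with ((s * o * w - e * r * z)^2) by ring.
Qed.

Definition near_square_bound (h g r : Z) : nat :=
  if g * r^2 <=? 16 * h * h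
  then 2 * Z.to_nat (2 * Z.sqrt (1152 * h * h / (g * r^2)) + 1) else 0.

Definition near_line_bound (h g r : Z) : nat :=
  Z.to_nat (2 * Z.sqrt (208 * h * h / (g * r^2)) + 1).

Lemma count_near_square_zrange h e g r : 1 <= h -> (e = 1 \/ e = -1) -> 1 <= g -> 1 <= r ->
  (count (near_square e (g * r^2) (12 * h)) (zrange (2 * h)) <= near_square_bound h g r)%nat.
Proof.
  intros Hh He Hg Hr. unfold near_square_bound.
  destruct (Z.leb_spec (g * r^2) (16 * h * h)).
  - replace (1152 * h * h) with (8 * (12 * h) * (12 * h)) by ring.
    apply count_near_square_le; [apply NoDup_zrange|auto|nia].
  - rewrite count_false; [lia|]. intros w Hw. apply in_zrange in Hw.
    assert (w^2 <= (2 * h) * (2 * h)) by (apply sq_le_of_bound; lia).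
    assert (h <= h * h) by nia.
    unfold near_square. apply Z.leb_gt. destruct He; subst; lia.
Qed.

Lemma count_fiber_slice h swap g r e s o : 1 <= h -> 1 <= g -> 1 <= r ->
  (e = 1 \/ e = -1) -> (s = 1 \/ s = -1) ->
  (count (code_ok h) (flat_map (fun w => map (mk_code swap g r e s o w) (zrange (2 * h)))
                                (zrange (2 * h)))
   <= near_square_bound h g r * near_line_bound h g r)%nat.
Proof.
  intros Hh Hg Hr He Hs.
  set (near_w := near_square e (g * r^2) (12 * h)).
  eapply Nat.le_trans.
  { apply (count_flat_map_le _ _ _ (fun w => Nat.b2n (near_w w) * near_line_bound h g r)%nat).
    intros w _. rewrite count_map. destruct (near_w w) eqn:Hw; simpl Nat.b2n.
    - rewrite Nat.mul_1_l. unfold near_line_bound.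
      replace (208 * h * h) with (4 * (52 * h * h)) by ring.
      eapply Nat.le_trans;
        [|apply count_near_line_le with (sg := if swap then e else s);
            [apply NoDup_zrange|auto|auto|destruct swap; auto]].
      apply count_le_mono. intros z _ Hz. apply (code_ok_mk_code _ _ _ _ _ _ _ _ _ Hz).
    - rewrite count_false; [lia|]. intros z _.
      destruct (code_ok h (mk_code swap g r e s o w z)) eqn:Hz; auto.
      apply code_ok_mk_code in Hz as [Hz _]. unfold near_w in Hw. congruence. }
  rewrite list_sum_b2n_mul. apply Nat.mul_le_mono_r. now apply count_near_square_zrange.
Qed.

Definition fiber_bound (h g r : Z) : nat :=
  8 * Z.to_nat (r + 1) * near_square_bound h g r * near_line_bound h g r.

Lemma count_fiber_le h g r : 1 <= h -> 1 <= g -> 1 <= r ->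
  (count (code_ok h) (fiber h g r) <= fiber_bound h g r)%nat.
Proof.
  intros Hh Hg Hr. unfold fiber, fiber_bound.
  set (slice := (near_square_bound h g r * near_line_bound h g r)%nat).
  eapply Nat.le_trans.
  { apply count_flat_map_le_const with (bound := (2 * (2 * (Z.to_nat (r + 1) * slice)))%nat).
    intros swap _. apply count_flat_map_le_const. intros e He.
    apply count_flat_map_le_const. intros s Hs.
    eapply Nat.le_trans; [apply count_flat_map_le_const|].
    - intros o _. apply count_fiber_slice; auto using in_signs.
    - rewrite length_zint. replace (r - 0 + 1) with (r + 1) by ring. lia. }
  simpl length. unfold slice. lia.
Qed.

Definition fiber_sum (h : Z) : nat :=
  list_sum (map (fun g => list_sum (map (fiber_bound h g) (zint 1 (4 * h)))) (zint 1 (16 * h * h))).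

Lemma count_codes_le h : 1 <= h -> (count (code_ok h) (codes h) <= fiber_sum h)%nat.
Proof.
  intros Hh. apply count_flat_map_le. intros g Hg. apply count_flat_map_le. intros r Hr.
  apply in_zint in Hg, Hr. apply count_fiber_le; lia.
Qed.

Lemma fiber_bound_mul_le h g r : 1 <= h -> 1 <= g -> 1 <= r ->
  Z.of_nat (fiber_bound h g r) * (g * r) <= 132096 * (h * h).
Proof.
  intros Hh Hg Hr. unfold fiber_bound, near_square_bound, near_line_bound.
  set (s0 := g * r^2). assert (Hs0 : 1 <= s0) by (unfold s0; nia).
  destruct (Z.leb_spec s0 (16 * h * h)) as [Hle|]; [|rewrite Nat.mul_0_r, Nat.mul_0_l; nia].
  set (L := Z.sqrt (1152 * h * h / s0)). set (K := Z.sqrt (208 * h * h / s0)).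
  assert (HL : 0 <= L) by apply Z.sqrt_nonneg. assert (HK : 0 <= K) by apply Z.sqrt_nonneg.
  assert (HLs : L * L * s0 <= 1152 * h * h) by (apply sqrt_div_mul_le; nia).
  assert (HKs : K * K * s0 <= 208 * h * h) by (apply sqrt_div_mul_le; nia).
  (* AM-GM: 2 L K <= L^2 + K^2, 2 L <= 1 + L^2 and 2 K <= 1 + K^2, each multiplied by s0 *)
  pose proof (Z.mul_nonneg_nonneg s0 ((L - K) * (L - K)) ltac:(lia) (Z.square_nonneg _)).
  pose proof (Z.mul_nonneg_nonneg s0 ((L - 1) * (L - 1)) ltac:(lia) (Z.square_nonneg _)).
  pose proof (Z.mul_nonneg_nonneg s0 ((K - 1) * (K - 1)) ltac:(lia) (Z.square_nonneg _)).
  assert (Hgr : g * r * (r + 1) <= 2 * s0) by (unfold s0; nia).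
  rewrite !Nat2Z.inj_mul, !Z2Nat.id by lia.
  change (Z.of_nat 8) with 8. change (Z.of_nat 2) with 2.
  replace (8 * (r + 1) * (2 * (2 * L + 1)) * (2 * K + 1) * (g * r))
    with (16 * (g * r * (r + 1)) * ((2 * L + 1) * (2 * K + 1))) by ring.
  assert (16 * (g * r * (r + 1)) * ((2 * L + 1) * (2 * K + 1))
          <= 16 * (2 * s0) * ((2 * L + 1) * (2 * K + 1)))
    by (apply Z.mul_le_mono_nonneg_r; nia).
  lia.
Qed.

Lemma count_degenerate_le h : 0 <= h ->
  (count (fun t => solves t && degenerate t) (box h)
   <= Z.to_nat (4 * h + 1) * Z.to_nat (2 * h + 1))%nat.
Proof.
  intros Hh.
  set (same_xa := fun (t : Z * Z * Z * Z * Z) (xa : Z * Z) =>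
                    let '(x, a, _, _, _) := t in xa = (x, a)).
  eapply Nat.le_trans.
  { apply (count_le_of_injective_rel _ (fun _ => true) _
             (list_prod (zrange (2 * h)) (zrange h)) same_xa).
    - apply NoDup_box.
    - intros [[[[x a] b] c] d] Hin _. apply in_box in Hin as (Hx & Ha & _).
      exists (x, a). repeat split. apply in_prod; now apply in_zrange.
    - intros [[[[x a] b] c] d] [[[[x' a'] b'] c'] d'] xa _ _ Ht Ht' -> E.
      injection E as <- <-. simpl in Ht, Ht'.
      rewrite !andb_true_iff, !Z.eqb_eq in Ht, Ht'.
      destruct Ht as [Hsol [Hm Hn]], Ht' as [Hsol' [Hm' Hn']].
      apply degenerate_kfac in Hsol, Hsol'; auto. unfold mfac, nfac, kfac in *.
      repeat f_equal; lia. }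
  eapply Nat.le_trans; [apply count_le_length|].
  rewrite length_prod, !zrange_zint, !length_zint. apply Nat.eq_le_incl. f_equal; f_equal; ring.
Qed.

Lemma R_count_le H : (1 <= H)%nat ->
  (R_count H <= Z.to_nat (4 * Z.of_nat H + 1) * Z.to_nat (2 * Z.of_nat H + 1)
                + fiber_sum (Z.of_nat H))%nat.
Proof.
  intros HH. rewrite R_count_box. set (h := Z.of_nat H). assert (Hh : 1 <= h) by lia.
  eapply Nat.le_trans.
  { apply (count_le_or solves (fun t => solves t && degenerate t)
                              (fun t => solves t && negb (degenerate t))).
    intros t _ Ht. rewrite Ht. destruct (degenerate t); auto. }
  apply Nat.add_le_mono; [apply count_degenerate_le; lia|].
  eapply Nat.le_trans; [|now apply count_codes_le].
  apply (count_le_of_injective_rel _ _ _ _ parametrises).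
  - apply NoDup_box.
  - intros t Hin Ht. apply andb_true_iff in Ht as [Hsol Hnd].
    apply solution_has_code; auto. now apply negb_true_iff.
  - intros t t' k _ _ _ _. apply parametrises_inj.
Qed.

Open Scope R_scope.

Definition Rsum (l : list R) : R := fold_right Rplus 0 l.

Lemma Rsum_app l1 l2 : Rsum (l1 ++ l2) = Rsum l1 + Rsum l2.
Proof. induction l1 as [|x l IH]; simpl; [ring|]. rewrite IH. ring. Qed.

Lemma Rsum_le {A} (f f' : A -> R) l :
  (forall x, In x l -> f x <= f' x) -> Rsum (map f l) <= Rsum (map f' l).
Proof.
  induction l as [|x l IH]; simpl; intros Hf; [lra|].
  specialize (Hf x (or_introl eq_refl)) as Hx.
  specialize (IH (fun y Hy => Hf y (or_intror Hy))). lra.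
Qed.

Lemma Rsum_scal {A} c (f : A -> R) l : Rsum (map (fun x => c * f x) l) = c * Rsum (map f l).
Proof. induction l as [|x l IH]; simpl; [ring|]. rewrite IH. ring. Qed.

Lemma INR_list_sum {A} (F : A -> nat) l :
  INR (list_sum (map F l)) = Rsum (map (fun x => INR (F x)) l).
Proof. induction l as [|x l IH]; simpl; auto. now rewrite plus_INR, IH. Qed.

Lemma ln_le x y : 0 < x -> x <= y -> ln x <= ln y.
Proof.
  intros Hx Hxy. destruct (Rle_lt_or_eq_dec _ _ Hxy) as [Hlt| ->]; [|lra].
  left. now apply ln_increasing.
Qed.

Lemma ln_le_sub_1 y : 0 < y -> ln y <= y - 1.
Proof. intros Hy. pose proof (exp_ineq1_le (ln y)) as He. rewrite exp_ln in He; lra. Qed.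

Lemma inv_succ_le_ln_diff x : 0 < x -> / (x + 1) <= ln (x + 1) - ln x.
Proof.
  intros Hx. pose proof (ln_le_sub_1 (x * / (x + 1))) as Hln.
  rewrite ln_mult, ln_Rinv in Hln by (try apply Rinv_0_lt_compat; lra).
  replace (x * / (x + 1) - 1) with (- / (x + 1)) in Hln by (field; lra).
  assert (0 < x * / (x + 1)) by (apply Rmult_lt_0_compat; [lra|apply Rinv_0_lt_compat; lra]).
  lra.
Qed.

Lemma harmonic_le (n : nat) : (1 <= n)%nat ->
  Rsum (map (fun k => / INR (S k)) (seq 0 n)) <= 1 + ln (INR n).
Proof.
  induction n as [|n IH]; intros Hn; [lia|].
  destruct (Nat.eq_dec n 0) as [->|Hn0]; [simpl; rewrite ln_1; lra|].
  rewrite seq_S, map_app, Rsum_app.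
  change (Rsum (map (fun k => / INR (S k)) [(0 + n)%nat])) with (/ INR (S n) + 0).
  assert (Hn1 : 1 <= INR n) by (apply (le_INR 1); lia).
  assert (Hstep := inv_succ_le_ln_diff (INR n)).
  specialize (IH ltac:(lia)). rewrite S_INR. lra.
Qed.

Lemma sum_inv_zint_le N : (1 <= N)%Z ->
  Rsum (map (fun z => / IZR z) (zint 1 N)) <= 1 + ln (IZR N).
Proof.
  intros HN. unfold zint. rewrite map_map. replace (N - 1 + 1)%Z with N by ring.
  rewrite (map_ext _ (fun k => / INR (S k))).
  - replace (IZR N) with (INR (Z.to_nat N)) by (rewrite INR_IZR_INZ; f_equal; lia).
    apply harmonic_le. lia.
  - intros k. now rewrite plus_IZR, <- INR_IZR_INZ, S_INR, Rplus_comm.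
Qed.

Lemma sum_le_harmonic (f : Z -> R) (c : R) (N : Z) : (1 <= N)%Z -> 0 <= c ->
  (forall z, (1 <= z <= N)%Z -> f z * IZR z <= c) ->
  Rsum (map f (zint 1 N)) <= c * (1 + ln (IZR N)).
Proof.
  intros HN Hc Hf. eapply Rle_trans.
  - apply (Rsum_le _ (fun z => c * / IZR z)). intros z Hz. apply in_zint in Hz.
    specialize (Hf z Hz). assert (Hz0 : 0 < IZR z) by (apply IZR_lt; lia).
    apply (Rmult_le_reg_r (IZR z)); auto. now rewrite Rmult_assoc, Rinv_l, Rmult_1_r by lra.
  - rewrite Rsum_scal. apply Rmult_le_compat_l; auto. now apply sum_inv_zint_le.
Qed.

Lemma double_sum_le_harmonic (F : Z -> Z -> nat) (K : R) (G N : Z) :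
  (1 <= G)%Z -> (1 <= N)%Z -> 0 <= K ->
  (forall g r, (1 <= g <= G)%Z -> (1 <= r <= N)%Z -> INR (F g r) * IZR g * IZR r <= K) ->
  INR (list_sum (map (fun g => list_sum (map (F g) (zint 1 N))) (zint 1 G)))
    <= K * (1 + ln (IZR N)) * (1 + ln (IZR G)).
Proof.
  intros HG HN HK HF. rewrite INR_list_sum.
  assert (HlnN : 0 <= 1 + ln (IZR N)).
  { assert (0 <= ln (IZR N)); [rewrite <- ln_1; apply ln_le; [lra|apply IZR_le; lia]|lra]. }
  apply sum_le_harmonic; auto; [apply Rmult_le_pos; auto|].
  intros g Hg. rewrite INR_list_sum. assert (Hg0 : 0 < IZR g) by (apply IZR_lt; lia).
  rewrite Rmult_comm, <- Rsum_scal. apply sum_le_harmonic; auto.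
  intros r Hr. rewrite (Rmult_comm (IZR g)). auto.
Qed.

Lemma R_count_le_real H : (1 <= H)%nat ->
  INR (R_count H) <=
  15 * INR H ^ 2 + 132096 * INR H ^ 2 * (1 + ln (4 * INR H)) * (1 + ln (16 * INR H * INR H)).
Proof.
  intros HH. pose proof (le_INR _ _ (R_count_le H HH)) as Hcount.
  rewrite plus_INR, mult_INR in Hcount.
  set (h := Z.of_nat H) in Hcount.
  assert (Hdeg : (Z.to_nat (4 * h + 1) * Z.to_nat (2 * h + 1) <= 15 * H * H)%nat)
    by (unfold h; nia).
  apply le_INR in Hdeg. rewrite !mult_INR in Hdeg.
  replace (INR 15) with 15 in Hdeg by (simpl; ring).
  assert (HhX : IZR h = INR H) by (unfold h; now rewrite INR_IZR_INZ).
  set (X := INR H) in *.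
  assert (Hfib : INR (fiber_sum h) <= 132096 * X^2 * (1 + ln (4 * X)) * (1 + ln (16 * X * X))).
  { rewrite <- HhX, <- !mult_IZR. apply double_sum_le_harmonic; [unfold h; lia|unfold h; lia|nra|].
    intros g r Hg Hr. pose proof (fiber_bound_mul_le h g r) as Hb.
    apply IZR_le in Hb; [|unfold h; lia|lia|lia].
    rewrite !mult_IZR, <- INR_IZR_INZ in Hb. nra. }
  nra.
Qed.

Lemma log_factor_le X : 4 <= X ->
  15 * X^2 + 132096 * X^2 * (1 + ln (4 * X)) * (1 + ln (16 * X * X))
    <= 2000000 * X^2 * (ln X)^2.
Proof.
  intros HX. set (L := ln X).
  assert (Hln4 : 1 <= ln 4).
  { replace 4 with (2 * 2) by ring. rewrite ln_mult by lra. pose proof ln_lt_2. lra. }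
  assert (Hln4L : ln 4 <= L) by (apply ln_le; lra).
  assert (H4X : 1 + ln (4 * X) <= 3 * L) by (rewrite ln_mult by lra; fold L; lra).
  assert (H16X : 1 + ln (16 * X * X) <= 5 * L).
  { replace (16 * X * X) with ((4 * 4) * (X * X)) by ring.
    rewrite !ln_mult by nra. fold L. lra. }
  assert (Hprod : (1 + ln (4 * X)) * (1 + ln (16 * X * X)) <= 15 * L^2).
  { assert (0 <= 1 + ln (4 * X)) by (rewrite ln_mult by lra; fold L; lra). nra. }
  assert (HX2 : 0 <= X^2) by nra. assert (HL2 : 1 <= L^2) by nra.
  nra.
Qed.

Theorem proposition3p1 :
  exists (C : R) (H0 : nat), forall H : nat, (H0 <= H)%nat ->
    INR (R_count H) <= C * (INR H)^2 * (ln (INR H))^2.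
Proof.
  exists 2000000, 4%nat. intros H HH.
  eapply Rle_trans; [apply R_count_le_real; lia|].
  apply log_factor_le. replace 4 with (INR 4) by (simpl; ring). now apply le_INR.
Qed.
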